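(* Let $f^*$ be any maximum flow in $\mathcal{H}$. Let $V_1\subseteq V$ be nonempty with $\rho_h(V_1)=\rho_h^*$, and let $\Lambda_1=\{\lambda\in\Lambda:\lambda\subseteq V_1\}$. Then for every non-trivial component $C$ of $\mathcal{H}_{f^*}$, either $C\subseteq V_1\cup\Lambda_1$ or $C\cap(V_1\cup\Lambda_1)=\emptyset$.
   Context: Let $G=(V,E)$ be a finite simple undirected graph and $h\ge2$. An $h$-clique is a set of $h$ pairwise adjacent nodes; $\mu_h(G[W])$ counts $h$-cliques inside $W$; for nonempty $W$, $\rho_h(W)=\mu_h(G[W])/|W|$; $\rho_h^*=\max_{\emptyset\ne W\subseteq V}\rho_h(W)$; $deg_G(v,h)$ is the number of $h$-cliques containing $v$; $\Lambda$ is the set of $(h-1)$-cliques of $G$ contained in some $h$-clique. Flow network $\mathcal{H}=(V_\mathcal{H},E_\mathcal{H},c)$: $V_\mathcal{H}=V\cup\Lambda\cup\{s,t\}$; for $v\in V$: arcs $(s,v)$ cap. $deg_G(v,h)$, $(v,t)$ cap. $h\rho_h^*$, $(v,s),(t,v)$ cap. $0$; for $\lambda\in\Lambda$, $v\in\lambda$: $(\lambda,v)$ cap. $+\infty$, $(v,\lambda)$ cap. $0$; for $\lambda\in\Lambda$, $v\in V$ with $\lambda\cup\{v\}$ an $h$-clique: $(v,\lambda)$ cap. $1$, $(\lambda,v)$ cap. $0$; no other arcs. A flow $f$ satisfies $f(u,v)\le c(u,v)$, $f(v,u)=-f(u,v)$, conservation at nodes other than $s,t$; value $\sum_v f(s,v)$.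 The residual graph $\mathcal{H}_{f}$ has an arc $(u,v)$ whenever $(u,v)\in E_\mathcal{H}$ and $c(u,v)-f(u,v)>0$. A non-trivial component is a strongly connected component of $\mathcal{H}_{f^*}$ containing neither $s$ nor $t$. *)

From HB Require Import structures.
From mathcomp Require Import all_boot all_order all_algebra.
Set Implicit Arguments. Unset Strict Implicit. Unset Printing Implicit Defensive.
Import Order.TTheory GRing.Theory Num.Theory.
Local Open Scope ring_scope.

Section Defs.
Variables (V : finType) (e : rel V) (h : nat) (R : realFieldType).

Definition is_clique (S : {set V}) : bool :=
  [forall x in S, forall y in S, (x != y) ==> e x y].

Definition hcliques : {set {set V}} :=
  [set S : {set V} | is_clique S & #|S| == h].

Definition mu (W : {set V}) : nat := #|[set S in hcliques | S \subset W]|.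

Definition rho (W : {set V}) : R := (mu W)%:R / (#|W|)%:R.

(* rho_h^* = max over nonempty W of rho_h(W)  (all rho values are >= 0) *)
Definition rho_star : R := \big[Num.max/0]_(W : {set V} | W != set0) rho W.

Definition hdeg (v : V) : nat := #|[set S in hcliques | v \in S]|.

Definition Lam : {set {set V}} :=
  [set L : {set V} | [&& is_clique L, #|L| == h.-1 &
                        [exists S in hcliques, L \subset S]]].

Definition lamT := {L : {set V} | L \in Lam}.

(* nodes of the flow network: inl true = s, inl false = t,
   inr (inl v) = v in V, inr (inr L) = lambda in Lambda *)
Definition node := (bool + (V + lamT))%type.
Definition src : node := inl true.
Definition snk : node := inl false.

Definition arcH (u w : node) : bool :=
  match u, w with
  | inl true, inr (inl _) => true
  | inr (inl _), inl false => true
  | inr (inl _), inl true => true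
  | inl false, inr (inl _) => true
  | inr (inr L), inr (inl v) => (v \in val L) || (v |: val L \in hcliques)
  | inr (inl v), inr (inr L) => (v \in val L) || (v |: val L \in hcliques)
  | _, _ => false
  end.

(* capacities; None stands for +infinity; non-arcs get capacity 0 *)
Definition capH (u w : node) : option R :=
  match u, w with
  | inl true, inr (inl v) => Some (hdeg v)%:R
  | inr (inl _), inl false => Some (h%:R * rho_star)
  | inr (inr L), inr (inl v) => if v \in val L then None else Some 0
  | inr (inl v), inr (inr L) =>
      if (v \notin val L) && (v |: val L \in hcliques) then Some 1 else Some 0
  | _, _ => Some 0
  end.

Definition le_cap (x : R) (c : option R) : Prop :=
  match c with None => True | Some c => x <= c end.

Definition is_flow (f : node -> node -> R) : Prop :=
  [/\ forall u w, le_cap (f u w) (capH u w),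
      forall u w, f w u = - f u w &
      forall u, u != src -> u != snk -> \sum_(w : node) f u w = 0].

Definition flow_value (f : node -> node -> R) : R :=
  \sum_(v : V) f src (inr (inl v)).

Definition is_max_flow (f : node -> node -> R) : Prop :=
  is_flow f /\ forall g, is_flow g -> flow_value g <= flow_value f.

Definition residual (f : node -> node -> R) : rel node :=
  fun u w => arcH u w &&
    match capH u w with None => true | Some c => f u w < c end.

Definition is_scc (r : rel node) (C : {set node}) : Prop :=
  exists x, C = [set y | connect r x y && connect r y x].

Definition nontrivial_component (f : node -> node -> R) (C : {set node}) : Prop :=
  is_scc (residual f) C /\ src \notin C /\ snk \notin C.

Definition V1Lam1 (V1 : {set V}) : {set node} :=
  [set u : node | match u with
                  | inr (inl v) => v \in V1
                  | inr (inr L) => val L \subset V1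
                  | _ => false end].

End Defs.

From mathcomp Require Import all_boot all_order all_algebra.
From mathcomp Require Import ring lra.
Import Order.TTheory GRing.Theory Num.Theory.
Set Implicit Arguments. Unset Strict Implicit. Unset Printing Implicit Defensive.
Local Open Scope ring_scope.

(* A maximum flow admits no augmenting path, so the set of nodes reachable from s
   in its residual graph is a cut whose capacity equals the flow value. Any cut A
   containing s but not t and closed under the infinite arcs lambda -> v has
   capacity at least h K, K the number of h-cliques: if W is its part in V, then
   sum_v deg(v) = h K and the cut exceeds h K by h (|W| rho* - mu(W)) >= 0 (the
   cliques leaving W are paid by the unit arcs v -> lambda). For W = V1 this excess
   vanishes, so the cut {s} u V1 u Lambda1 has capacity h K = the maximum flow
   value: every arc leaving it is saturated and it is closed in the residual
   graph. A strongly connected component meeting V1 u Lambda1 therefore lies in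
   it, hence, avoiding s, in V1 u Lambda1. *)

Lemma card_set_sum_nat (I : finType) (P Q : pred I) :
  #|[set i | P i && Q i]| = (\sum_(i | P i) Q i)%N.
Proof.
rewrite -sum1dep_card [RHS]big_mkcond [LHS]big_mkcond /=; apply: eq_bigr => i _.
by case: (P i); case: (Q i).
Qed.

Lemma sum_card_incident (I : finType) (F : {set {set I}}) :
  (\sum_x #|[set S in F | x \in S]|)%N = (\sum_(S in F) #|S|)%N.
Proof.
rewrite (eq_bigr (fun x => \sum_(S in F) (x \in S))%N); last first.
  by move=> x _; rewrite -card_set_sum_nat.
rewrite exchange_big /=; apply: eq_bigr => S _.
by rewrite -sum1_card [RHS]big_mkcond; apply: eq_bigr => x _; case: (x \in S).
Qed.

Lemma closed_connect (T : finType) (r : rel T) (S : {set T}) :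
  (forall u w, u \in S -> r u w -> w \in S) ->
  forall y z, connect r y z -> y \in S -> z \in S.
Proof.
move=> clS y z /connectP[p + ->]; elim: p y => [|x p IHp] y //= /andP[ryx rp] yS.
exact: IHp rp (clS _ _ yS ryx).
Qed.

Lemma scc_subset_closed (T : finType) (r : rel T) (S C : {set T}) :
  (forall u w, u \in S -> r u w -> w \in S) ->
  (exists x, C = [set y | connect r x y && connect r y x]) ->
  ~~ [disjoint C & S] -> C \subset S.
Proof.
move=> clS [x ->]; rewrite -setI_eq0 => /set0Pn[y]; rewrite !inE => /andP[/andP[_ yx] yS].
apply/subsetP => z; rewrite inE => /andP[xz _].
exact: (@closed_connect _ _ _ clS y z (connect_trans yx xz) yS).
Qed.

Section Cliques.
Variables (V : finType) (e : rel V) (h : nat).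
Local Notation hcl := (hcliques e h).

Lemma is_cliqueS (L S : {set V}) : L \subset S -> is_clique e S -> is_clique e L.
Proof.
move=> sLS /forall_inP cS; apply/forall_inP => x xL; apply/forall_inP => y yL.
by have /forall_inP := cS x (subsetP sLS x xL); apply; apply: subsetP sLS y yL.
Qed.

Lemma card_hclique S : S \in hcl -> #|S| = h.
Proof. by rewrite inE => /andP[_ /eqP]. Qed.

Lemma sum_hdeg : (\sum_v hdeg e h v)%N = (h * #|hcl|)%N.
Proof.
rewrite /hdeg sum_card_incident (eq_bigr (fun=> h)); last exact: card_hclique.
by rewrite sum_nat_const mulnC.
Qed.

Lemma mu_set0 : (0 < h)%N -> mu e h set0 = 0%N.
Proof.
move=> h_gt0; apply/eqP; rewrite cards_eq0; apply/eqP/setP => S.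
rewrite !inE subset0 andbC; case: eqP => // -> /=.
by rewrite cards0 eq_sym eqn0Ngt h_gt0 andbF.
Qed.

Definition deg_in (W : {set V}) (v : V) := #|[set S in hcl | (v \in S) && (S \subset W)]|.
Definition deg_out (W : {set V}) (v : V) := #|[set S in hcl | (v \in S) && ~~ (S \subset W)]|.

Lemma hdeg_split (W : {set V}) (v : V) : hdeg e h v = (deg_in W v + deg_out W v)%N.
Proof.
rewrite /hdeg -(cardsID [set S : {set V} | S \subset W]).
by congr (_ + _)%N; apply: eq_card => S; rewrite !inE -!andbA; do !bool_congr.
Qed.

Lemma deg_in_notin (W : {set V}) (v : V) : v \notin W -> deg_in W v = 0%N.
Proof.
move=> vW; apply/eqP; rewrite cards_eq0; apply/eqP/setP => S; rewrite !inE.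
by apply/negP => /and3P[_ vS /subsetP/(_ v vS)]; apply/negP.
Qed.

Lemma sum_deg_in (W : {set V}) : (\sum_v deg_in W v)%N = (h * mu e h W)%N.
Proof.
set F := [set S in hcl | S \subset W].
rewrite (eq_bigr (fun v => #|[set S in F | v \in S]|)); last first.
  by move=> v _; apply: eq_card => S; rewrite !inE -!andbA; do !bool_congr.
rewrite sum_card_incident (eq_bigr (fun=> h)); first by rewrite sum_nat_const mulnC.
by move=> S; rewrite inE => /andP[/card_hclique].
Qed.

Definition completes (v : V) (L : {set V}) := (v \notin L) && (v |: L \in hcl).

Lemma completes_lam (v : V) (S : {set V}) : S \in hcl -> v \in S -> S :\ v \in Lam e h.
Proof.
move=> Shcl vS; have := Shcl; rewrite inE => /andP[cS /eqP cardS].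
rewrite inE (is_cliqueS (subsetDl S [set v]) cS) /=.
apply/andP; split; first by rewrite (cardsD1 v S) vS add1n in cardS; rewrite -cardS.
by apply/existsP; exists S; rewrite Shcl subsetDl.
Qed.

Lemma card_completes_out (W : {set V}) (v : V) : v \in W ->
  #|[set L : lamT e h | ~~ (val L \subset W) && completes v (val L)]| = deg_out W v.
Proof.
move=> vW; set D := [set L | _].
have inj : {in D &, injective (fun L : lamT e h => v |: val L)}.
  move=> L1 L2; rewrite !inE => /and3P[_ vL1 _] /and3P[_ vL2 _] E.
  by apply: val_inj; rewrite -(setU1K vL1) -(setU1K vL2) E.
rewrite -(card_in_imset inj); apply: eq_card => S; rewrite inE.
apply/imsetP/and3P => [[L]|[Shcl vS SW]].
  by rewrite inE => /and3P[LW _ Lhcl] ->; rewrite Lhcl setU11 subUset negb_and LW orbT.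
exists (Sub (S :\ v) (completes_lam Shcl vS)); last by rewrite /= setD1K.
rewrite inE /= /completes setD11 setD1K // Shcl !andbT; move: SW; apply: contra => sub.
by rewrite -(setD1K vS) subUset sub1set vW.
Qed.

End Cliques.

Section PathSteps.
Variables (T : finType) (R : numDomainType).

Definition steps (x : T) (p : seq T) := zip (x :: p) p.

Definition step_count (x : T) p u w : R := (count (pred1 (u, w)) (steps x p))%:R.

Lemma sum_pair_eq_l (a b y : T) : \sum_w ((a, b) == (y, w))%:R = (a == y)%:R :> R.
Proof.
rewrite (bigD1 b) //= xpair_eqE eqxx andbT big1 ?addr0 // => w /negbTE wb.
by rewrite xpair_eqE (eq_sym b) wb andbF.
Qed.

Lemma sum_pair_eq_r (a b y : T) : \sum_w ((a, b) == (w, y))%:R = (b == y)%:R :> R.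
Proof.
rewrite (bigD1 a) //= xpair_eqE eqxx /= big1 ?addr0 // => w /negbTE wa.
by rewrite xpair_eqE (eq_sym a) wa.
Qed.

(* Sending one unit along every step of the path is conserved except at its ends. *)
Lemma step_count_net x p y :
  \sum_w (step_count x p y w - step_count x p w y) = (y == x)%:R - (y == last x p)%:R.
Proof.
elim: p x => [|x1 p IHp] x.
  by rewrite /= subrr big1 // => w _; rewrite /step_count /= subrr.
have stepE u w : step_count x (x1 :: p) u w = ((x, x1) == (u, w))%:R + step_count x1 p u w.
  by rewrite /step_count /steps /= natrD.
under eq_bigr => w _ do rewrite !stepE opprD addrACA.
rewrite big_split /= IHp sumrB sum_pair_eq_l sum_pair_eq_r /= (eq_sym x1) (eq_sym x).
by rewrite addrA subrK.
Qed.

Lemma step_count_le_size x p u w : step_count x p u w <= (size p)%:R.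
Proof.
rewrite /step_count ler_nat; apply: leq_trans (count_size _ _) _.
by rewrite size_zip /= geq_minr.
Qed.

Lemma path_steps (r : rel T) x p u w :
  path r x p -> (0 < count (pred1 (u, w)) (steps x p))%N -> r u w.
Proof.
elim: p x => [|x1 p IHp] x //= /andP[rxx1 rp].
rewrite /steps /= -/(steps x1 p); case: eqP => [[<- <-] //|_]; exact: IHp.
Qed.

End PathSteps.

Section Flows.
Variables (V : finType) (e : rel V) (h : nat) (R : realFieldType).
Local Notation nd := (node e h).
Local Notation s := (@src V e h).
Local Notation t := (@snk V e h).
Implicit Types (f : nd -> nd -> R) (u w : nd) (A : {set nd}).

(* Infinite capacities are read as 0: [cutcap] below is only meaningful for cuts
   that no infinite arc leaves. *)
Definition fincap u w : R := if capH R u w is Some c then c else 0.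

Lemma arcH_sym u w : arcH u w = arcH w u.
Proof. by case: u => [[]|[v|L]]; case: w => [[]|[v'|L']]. Qed.

Lemma capH_nonarc u w : ~~ arcH u w -> capH R u w = Some 0.
Proof.
case: u => [[]|[v|L]]; case: w => [[]|[v'|L']] //=.
- by rewrite negb_or => /andP[/negbTE -> /negbTE ->].
- by rewrite negb_or => /andP[/negbTE -> _].
Qed.

Lemma capH_None u w : capH R u w = None ->
  exists L v, [/\ u = inr (inr L), w = inr (inl v) & v \in val L].
Proof.
case: u => [[]|[v|L]]; case: w => [[]|[v'|L']] //=; first by case: ifP.
by case: ifP => // vL _; exists L, v'.
Qed.

Lemma flow_nonarc f u w : is_flow f -> ~~ arcH u w -> f u w = 0.
Proof.
move=> [cap anti _] nuw; have := cap u w; have := cap w u.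
rewrite anti (capH_nonarc nuw) (capH_nonarc (w := u)) 1?arcH_sym //= oppr_le0.
by move=> ge0 le0; apply/eqP; rewrite eq_le le0 ge0.
Qed.

Lemma flow_le_fincap f u w : is_flow f -> capH R u w != None -> f u w <= fincap u w.
Proof. by move=> [cap _ _]; have := cap u w; rewrite /fincap; case: capH. Qed.

Lemma sum_flow_src f : is_flow f -> \sum_w f s w = flow_value f.
Proof.
move=> fl; rewrite big_sumType /= big_bool /= big_sumType /= !(flow_nonarc fl) //.
by rewrite [X in _ + (_ + X)]big1 ?add0r ?addr0 // => L _; rewrite (flow_nonarc fl).
Qed.

Lemma flow_across_cut f A : is_flow f -> s \in A -> t \notin A ->
  flow_value f = \sum_(u in A) \sum_(w in ~: A) f u w.
Proof.
move=> fl sA tA; have [_ anti cons] := fl.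
have outA : \sum_(u in A) \sum_w f u w = flow_value f.
  rewrite (bigD1 s) //= sum_flow_src // big1 ?addr0 // => u /andP[uA us].
  by apply: cons => //; apply: contraNneq tA => <-.
have insideA : \sum_(u in A) \sum_(w in A) f u w = 0.
  set S := (X in X = 0); have SN : S = - S.
    rewrite [in LHS]/S exchange_big -sumrN; apply: eq_bigr => u _.
    by rewrite -sumrN; apply: eq_bigr => w _; apply: anti.
  by apply/eqP; rewrite -[_ == _](mulrn_eq0 _ 2) mulr2n {1}SN addNr.
rewrite -outA; under eq_bigr => u _ do rewrite (bigID (mem A)) /=.
by rewrite big_split /= insideA add0r; apply: eq_bigr => u _; apply: eq_bigl => w; rewrite inE.
Qed.

Definition cutcap A := \sum_(u in A) \sum_(w in ~: A) fincap u w.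

Definition finite_cut A := forall u w, u \in A -> w \notin A -> capH R u w != None.

Lemma residual_closed_tight_cut f A : is_flow f -> s \in A -> t \notin A ->
  finite_cut A -> cutcap A <= flow_value f ->
  forall u w, u \in A -> residual f u w -> w \in A.
Proof.
move=> fl sA tA finA tight u w uA ruw; apply/negPn/negP => wA.
have slack_ge0 x : x \in A -> forall y, y \in ~: A -> 0 <= fincap x y - f x y.
  by move=> xA y; rewrite inE subr_ge0 => /(finA _ _ xA)/(flow_le_fincap fl).
have slack0 : \sum_(x in A) \sum_(y in ~: A) (fincap x y - f x y) = 0.
  apply/eqP; rewrite eq_le sumr_ge0 => [|x xA]; last exact: sumr_ge0 (slack_ge0 x xA).
  under eq_bigr => x _ do rewrite sumrB.
  by rewrite sumrB -(flow_across_cut fl sA tA) subr_le0 andbT.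
have wA' : w \in ~: A by rewrite inE.
have row0 := psumr_eq0P (fun x xA => sumr_ge0 _ (slack_ge0 x xA)) slack0 uA.
have /eqP := psumr_eq0P (slack_ge0 u uA) row0 wA'.
move: ruw (finA u w uA wA); rewrite subr_eq0 /residual /fincap.
by case: capH => // c /andP[_ lt_fc] _ /eqP cE; rewrite cE ltxx in lt_fc.
Qed.

Lemma residual_gap f : exists2 m : R, 0 < m &
  forall u w c, residual f u w -> capH R u w = Some c -> m <= c - f u w.
Proof.
pose gap uw : R := if capH R uw.1 uw.2 is Some c then c - f uw.1 uw.2 else 1.
exists (\big[Num.min/1]_(uw | residual f uw.1 uw.2) gap uw).
  elim/big_ind: _ => // [x y x_gt0 y_gt0|[u w] /andP[_]]; first by rewrite lt_min x_gt0.
  by rewrite /gap /=; case: capH => // c; rewrite subr_gt0.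
move=> u w c ruw cE.
have := @bigmin_le_cond _ _ _ 1 (u, w) (fun uw => residual f uw.1 uw.2) gap ruw.
by rewrite /gap /= cE.
Qed.

Lemma augmenting_path f p : is_flow f -> path (residual f) s p -> last s p = t ->
  exists2 g : nd -> nd -> R, is_flow g & flow_value f < flow_value g.
Proof.
move=> fl rp pt; have [cap anti cons] := fl.
have [m m_gt0 m_le] := residual_gap f.
pose eps := m / (size p).+1%:R.
have eps_gt0 : 0 < eps by rewrite divr_gt0 // ltr0Sn.
have eps_size : eps * (size p)%:R <= m.
  rewrite /eps mulrAC ler_pdivrMr ?ltr0Sn // ler_wpM2l ?ler_nat //; exact: ltW.
pose g u w := f u w + eps * (step_count R s p u w - step_count R s p w u).
have net u : \sum_w g u w = \sum_w f u w + eps * ((u == s)%:R - (u == t)%:R).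
  by rewrite big_split /= -mulr_sumr step_count_net pt.
have gfl : is_flow g.
  split=> [u w|u w|u us ut]; last by rewrite net cons // (negbTE us) (negbTE ut) subrr mulr0 addr0.
    have fc := cap u w; case cE: capH fc => [c|] //= fc.
    have back_ge0 : 0 <= eps * step_count R s p w u by apply: mulr_ge0; [exact: ltW | exact: ler0n].
    have [c0|c_gt0] := posnP (count (pred1 (u, w)) (steps s p)).
      have c0' : step_count R s p u w = 0 by rewrite /step_count c0.
      by rewrite /g c0' mulrBr mulr0; lra.
    have := m_le u w c (path_steps rp c_gt0) cE.
    have : eps * step_count R s p u w <= eps * (size p)%:R.
      by apply: ler_wpM2l; [exact: ltW | exact: step_count_le_size].
    by rewrite /g mulrBr; lra.
  by rewrite /g anti; ring.
exists g => //; rewrite -!sum_flow_src // net eqxx.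
by rewrite (_ : (s == t) = false) // subr0 mulr1 ltrDl.
Qed.

Lemma max_flow_no_augmenting_path f : is_max_flow f -> ~~ connect (residual f) s t.
Proof.
move=> [fl fmax]; apply/negP => /connectP[p rp pt].
have [g gfl lt_fg] := augmenting_path fl rp (esym pt).
by have := fmax g gfl; rewrite leNgt lt_fg.
Qed.

Lemma flow_saturated f u w : is_flow f -> ~~ residual f u w -> f u w = fincap u w.
Proof.
move=> fl; have [cap _ _] := fl; rewrite /residual /fincap.
case a: (arcH u w) => /=; last by rewrite (flow_nonarc fl (negbT a)) capH_nonarc ?a.
move: (cap u w); case: capH => //= c le_fc; rewrite -leNgt => le_cf.
by apply/eqP; rewrite eq_le le_fc.
Qed.

Definition reachable f := [set y | connect (residual f) s y].

Lemma reachable_closed f u w : u \in reachable f -> residual f u w -> w \in reachable f.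
Proof. by rewrite !inE => su ruw; apply: connect_trans su (connect1 ruw). Qed.

Lemma max_flow_reachable_cut f : is_max_flow f -> flow_value f = cutcap (reachable f).
Proof.
move=> fmax; have [fl _] := fmax.
have sA : s \in reachable f by rewrite inE connect0.
have tA : t \notin reachable f by rewrite inE max_flow_no_augmenting_path.
rewrite (flow_across_cut fl sA tA); apply: eq_bigr => u uA; apply: eq_bigr => w.
by rewrite inE => wA; apply: flow_saturated => //; apply: contra wA; apply: reachable_closed.
Qed.

End Flows.

Section CliqueCuts.
Variables (V : finType) (e : rel V) (h : nat) (R : realFieldType).
Local Notation nd := (node e h).
Local Notation s := (@src V e h).
Local Notation t := (@snk V e h).
Local Notation fincap := (@fincap V e h R).
Local Notation cutcap := (@cutcap V e h R).
Local Notation K := #|hcliques e h|.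
Local Notation rs := (rho_star e h R).
Implicit Types (A : {set nd}) (W : {set V}).

Lemma fincap_lam L w : fincap (inr (inr L)) w = 0.
Proof. by case: w => [[]|[v|L']]; rewrite /fincap //=; case: ifP. Qed.

Lemma fincap_node_lam v L : fincap (inr (inl v)) (inr (inr L)) = (completes e h v (val L))%:R.
Proof. by rewrite /fincap /= /completes; case: (_ && _). Qed.

Lemma sum_fincap_src A :
  \sum_(w in ~: A) fincap s w = \sum_v (if inr (inl v) \in A then 0 else (hdeg e h v)%:R).
Proof.
rewrite big_mkcond big_sumType /= big_bool /= big_sumType /= !if_same !add0r.
rewrite [X in _ + X]big1 ?addr0 => [|L _]; last by rewrite if_same.
by apply: eq_bigr => v _; rewrite inE; case: (_ \in A).
Qed.

Lemma sum_fincap_node A v : s \in A -> t \notin A ->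
  \sum_(w in ~: A) fincap (inr (inl v)) w =
  h%:R * rs + \sum_(L | inr (inr L) \notin A) (completes e h v (val L))%:R.
Proof.
move=> sA tA; rewrite big_mkcond big_sumType /= big_bool /= big_sumType /=.
rewrite !inE (negbTE tA) (_ : inl true \in A) //= add0r.
rewrite big1 ?add0r => [|w _]; last by rewrite if_same.
congr (_ + _); rewrite [RHS]big_mkcond; apply: eq_bigr => L _.
by rewrite inE fincap_node_lam; case: (_ \in A).
Qed.

Lemma cutcapE A : s \in A -> t \notin A ->
  cutcap A = \sum_v (if inr (inl v) \in A then
     h%:R * rs + \sum_(L | inr (inr L) \notin A) (completes e h v (val L))%:R
     else (hdeg e h v)%:R).
Proof.
move=> sA tA; rewrite /cutcap big_mkcond big_sumType /= big_bool /=.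
rewrite (negbTE tA) (_ : inl true \in A) // addr0 sum_fincap_src big_sumType /=.
rewrite [X in _ + (_ + X)]big1 ?addr0 => [|L _]; last first.
  by case: (_ \in A) => //; apply: big1 => w _; apply: fincap_lam.
rewrite -big_split /=; apply: eq_bigr => v _.
by case: ifP => vA; rewrite ?add0r ?addr0 ?sum_fincap_node.
Qed.

Lemma mu_le_rho_star W : (0 < h)%N -> (mu e h W)%:R <= #|W|%:R * rs.
Proof.
move=> h_gt0; have [->|W0] := eqVneq W set0; first by rewrite mu_set0 // cards0 mul0r.
have W_gt0 : 0 < #|W|%:R :> R by rewrite ltr0n card_gt0.
rewrite mulrC -ler_pdivrMr //; exact: le_bigmax_cond.
Qed.

(* Capacity of the cut {s} u W u {lambda : lambda is contained in W}. *)
Definition wcut W : R :=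
  \sum_v (if v \in W then h%:R * rs + (deg_out e h W v)%:R else (hdeg e h v)%:R).

Lemma wcutE W : wcut W = (h * K)%:R + h%:R * (#|W|%:R * rs - (mu e h W)%:R).
Proof.
have sum_in : h%:R * (mu e h W)%:R = \sum_v (deg_in e h W v)%:R :> R.
  by rewrite -natrM -sum_deg_in natr_sum.
have sum_W : h%:R * (#|W|%:R * rs) = \sum_v (if v \in W then h%:R * rs else 0) :> R.
  by rewrite -big_mkcond /= sumr_const -mulr_natr; ring.
rewrite mulrBr sum_in sum_W -sum_hdeg natr_sum -sumrB -big_split /=.
apply: eq_bigr => v _; rewrite (hdeg_split e h W v) natrD.
by case: ifP => vW; [ring | rewrite deg_in_notin ?vW //; ring].
Qed.

Lemma wcut_ge W : (0 < h)%N -> (h * K)%:R <= wcut W.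
Proof. by move=> h_gt0; rewrite wcutE lerDl mulr_ge0 // subr_ge0 mu_le_rho_star. Qed.

Lemma wcut_densest W : W != set0 -> rho e h R W = rs -> wcut W = (h * K)%:R.
Proof.
move=> W0 dense; have W_neq0 : #|W|%:R != 0 :> R by rewrite pnatr_eq0 -lt0n card_gt0.
by rewrite wcutE -dense /rho [#|W|%:R * _]mulrC divfK // subrr mulr0 addr0.
Qed.

Definition lam_closed A :=
  forall L, inr (inr L) \in A -> forall v, v \in val L -> inr (inl v) \in A.

Lemma cutcap_ge_wcut A : s \in A -> t \notin A -> lam_closed A ->
  wcut [set v | inr (inl v) \in A] <= cutcap A.
Proof.
move=> sA tA clA; rewrite (cutcapE sA tA); apply: ler_sum => v _; rewrite inE.
case: ifP => // vA; rewrite lerD2l -card_completes_out ?inE // card_set_sum_nat.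
rewrite -natr_sum ler_nat; apply: (sub_le_big leqnn (fun x y => leq_addr y x)) => L.
by apply: contra => LA; apply/subsetP => w /(clA L LA); rewrite inE.
Qed.

Lemma cutcap_V1Lam1 W : cutcap (s |: V1Lam1 e h W) = wcut W.
Proof.
rewrite cutcapE ?setU11 ?inE //; apply: eq_bigr => v _; rewrite !inE /=.
case: ifP => // vW; rewrite -card_completes_out // card_set_sum_nat natr_sum.
by congr (_ + _); apply: eq_bigl => L; rewrite !inE.
Qed.

Lemma reachable_lam_closed (f : nd -> nd -> R) : lam_closed (reachable f).
Proof. by move=> L LA v vL; apply: reachable_closed LA _; rewrite /residual /= vL. Qed.

Lemma max_flow_value_ge (f : nd -> nd -> R) : (0 < h)%N -> is_max_flow f ->
  (h * K)%:R <= flow_value f.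
Proof.
move=> h_gt0 fmax; rewrite (max_flow_reachable_cut fmax).
have sA : s \in reachable f by rewrite inE connect0.
have tA : t \notin reachable f by rewrite inE max_flow_no_augmenting_path.
exact: le_trans (wcut_ge _ h_gt0) (cutcap_ge_wcut sA tA (reachable_lam_closed (f := f))).
Qed.

Lemma V1Lam1_finite_cut W : finite_cut R (s |: V1Lam1 e h W).
Proof.
move=> u w uS wS; apply/eqP => /capH_None[L [v [uL wv vL]]].
by move: uS wS; rewrite uL wv !inE /= => /subsetP/(_ v vL) ->.
Qed.

End CliqueCuts.

Theorem claim1 (V : finType) (e : rel V) (h : nat) (R : realFieldType)
  (e_sym : symmetric e) (e_irr : irreflexive e) (h_ge2 : (2 <= h)%N)
  (f : node e h -> node e h -> R) (fmax : is_max_flow f)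
  (V1 : {set V}) (V1_ne : V1 != set0) (V1_dense : rho e h R V1 = rho_star e h R)
  (C : {set node e h}) (C_nt : nontrivial_component f C) :
  C \subset V1Lam1 e h V1 \/ [disjoint C & V1Lam1 e h V1].
Proof.
have h_gt0 : (0 < h)%N by apply: leq_trans h_ge2.
have [fl _] := fmax.
set S := src e h |: V1Lam1 e h V1.
have tight : cutcap R S <= flow_value f.
  by rewrite cutcap_V1Lam1 wcut_densest //; apply: max_flow_value_ge.
have tS : snk e h \notin S by rewrite !inE.
have closedS := residual_closed_tight_cut fl (setU11 _ _) tS (@V1Lam1_finite_cut _ _ _ R V1) tight.
have [[x Cx] [sC _]] := C_nt.
have [|meet] := boolP [disjoint C & V1Lam1 e h V1]; [by right | left].
have CS : C \subset S.
  apply: scc_subset_closed closedS (ex_intro _ x Cx) _.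
  by apply: contra meet; apply: disjointWr; apply: subsetUr.
apply/subsetP => z zC; move: (subsetP CS z zC); rewrite in_setU1 => /orP[/eqP zs|//].
by move: sC; rewrite -zs zC.
Qed.
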